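(* In the setting below, suppose the tight disturbance bound assumption and the persistent excitation assumption hold. Then for all $t\in\mathbb{N}_{\ge0}$, all $\epsilon>0$, and every $\theta\in\mathbb{R}^p$ with $\|\theta^\ast-\theta\|\ge\epsilon$, there exists $j\in\{t+1,\dots,t+N_u\}$ such that $$\Pr\{\theta\notin\Delta_j\}\ \ge\ p_w\bigl(\epsilon\sqrt{\beta/N_u}\bigr).$$
   Context: Setting: $\theta^\ast\in\mathbb{R}^p$ is a fixed (unknown) parameter vector. $\mathcal{W}=\{w\in\mathbb{R}^{n_x}:\Pi_w w\le\pi_w\}$ is a compact convex polytope with $\pi_w>0$. The disturbances $w_0,w_1,\dots$ are independent random vectors with $w_t\in\mathcal{W}$ for all $t$. $D_0,D_1,\dots\in\mathbb{R}^{n_x\times p}$ is a given (non-random) sequence of regressor matrices. For $t\ge1$ the (random) unfalsified parameter set is $\Delta_t=\{\theta\in\mathbb{R}^p: D_{t-1}(\theta^\ast-\theta)+w_{t-1}\in\mathcal{W}\}$. $\|\cdot\|$ is the Euclidean norm (induced 2-norm for matrices); $\partial\mathcal{W}$ is the boundary of $\mathcal{W}$. Tight disturbance bound assumption: there is a function $p_w:(0,\infty)\to(0,1]$ such that for all $w^0\in\partial\mathcal{W}$, all $\epsilon>0$ and all $t\ge0$, $\Pr\{\|w_t-w^0\|<\epsilon\}\ge p_w(\epsilon)$. Persistent excitation assumption: there exist $\tau>0$, $\beta>0$ and an integer $N_u\ge\lceil p/n_x\rceil$ such that for every $t\ge0$, $\|D_t\|\le\tau$ and $\sum_{j=t}^{t+N_u-1}D_j^\top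 D_j\succeq\beta I$. *)

From HB Require Import structures.
From mathcomp Require Import all_boot all_order all_algebra.
From mathcomp Require Import all_classical all_reals all_analysis.
Set Implicit Arguments. Unset Strict Implicit. Unset Printing Implicit Defensive.
Import Order.TTheory GRing.Theory Num.Theory numFieldTopology.Exports numFieldNormedType.Exports.
Local Open Scope classical_set_scope.
Local Open Scope ring_scope.

Definition vnorm (R : realType) (n : nat) (v : 'cV[R]_n) : R :=
  Num.sqrt (\sum_(i < n) v i 0 ^+ 2).

Definition opnorm_le (R : realType) (m n : nat) (M : 'M[R]_(m, n)) (c : R) : Prop :=
  forall x : 'cV[R]_n, vnorm (M *m x) <= c * vnorm x.

Definition psd (R : realType) (n : nat) (A : 'M[R]_n) : Prop :=
  forall x : 'cV[R]_n, 0 <= (x^T *m A *m x) 0 0.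

Definition polytope (R : realType) (m n : nat) (Pi : 'M[R]_(m, n)) (pi : 'cV[R]_m)
  : set 'cV[R]_n := [set v | forall i, (Pi *m v) i 0 <= pi i 0].

Definition boundary (R : realType) (n : nat) (A : set 'cV[R]_n) : set 'cV[R]_n :=
  closure A `\` interior A.

Definition borel_vec (R : realType) (n : nat) : set (set 'cV[R]_n) :=
  <<s [set: 'cV[R]_n], open >>.

Definition rand_vec (R : realType) (d : measure_display) (T : measurableType d)
  (n : nat) (X : T -> 'cV[R]_n) : Prop :=
  forall A, borel_vec A -> measurable (X @^-1` A).

Definition mutually_independent (R : realType) (d : measure_display)
  (T : measurableType d) (P : probability T R) (n : nat)
  (X : nat -> T -> 'cV[R]_n) : Prop :=
  forall (s : seq nat) (A : nat -> set 'cV[R]_n), uniq s ->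
    (forall i, borel_vec (A i)) ->
    P (\bigcap_(i in [set` s]) (X i @^-1` A i)) =
    (\prod_(i <- s) P (X i @^-1` A i))%E.

(* Unfalsified parameter set Delta_j (j >= 1) at outcome x. *)
Definition Delta (R : realType) (T : Type) (m nx p : nat)
  (Pi : 'M[R]_(m, nx)) (pi : 'cV[R]_m) (D : nat -> 'M[R]_(nx, p))
  (w : nat -> T -> 'cV[R]_nx) (thetas : 'cV[R]_p) (j : nat) (x : T)
  : set 'cV[R]_p :=
  [set theta | polytope Pi pi (D j.-1 *m (thetas - theta) + w j.-1 x)].

From HB Require Import structures.
From mathcomp Require Import all_boot all_order all_algebra.
From mathcomp Require Import all_classical all_reals all_analysis.
From mathcomp Require Import ring lra.
Set Implicit Arguments. Unset Strict Implicit. Unset Printing Implicit Defensive.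
Import Order.TTheory GRing.Theory Num.Theory numFieldTopology.Exports numFieldNormedType.Exports.
Local Open Scope classical_set_scope.
Local Open Scope ring_scope.

(* Persistent excitation yields a j in the window with
   |D_j (thetas - theta)|^2 >= beta e^2 / Nu.  Put v := D_j (thetas - theta)
   and let w0 be a point of the compact set W maximising <v, .>; it lies on the
   boundary of W.  Whenever |w_j - w0| < e sqrt(beta / Nu) <= |v|, the point
   v + w_j has <v, v + w_j> > <v, w0>, so it leaves W, i.e. theta is falsified
   at time j + 1; the tight disturbance bound at w0 measures this event. *)

Definition dotv (R : pzRingType) n (a b : 'cV[R]_n) : R := \sum_i a i 0 * b i 0.

Section DotProduct.
Variables (R : comPzRingType) (n : nat).
Implicit Types (a b c : 'cV[R]_n).

Lemma dotvE a b : (a^T *m b) 0 0 = dotv a b.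
Proof. by rewrite mxE; apply: eq_bigr => i _; rewrite mxE. Qed.

Lemma dotvDr a b c : dotv a (b + c) = dotv a b + dotv a c.
Proof. by rewrite /dotv -big_split; apply: eq_bigr => i _; rewrite mxE mulrDr. Qed.

Lemma dotvZr a b s : dotv a (s *: b) = s * dotv a b.
Proof. by rewrite /dotv mulr_sumr; apply: eq_bigr => i _; rewrite mxE mulrCA. Qed.

Lemma dotv_polarization a b :
  2 * dotv a (a + b) = dotv a a + dotv (a + b) (a + b) - dotv b b.
Proof.
rewrite /dotv mulr_sumr -big_split -sumrB.
by apply: eq_bigr => i _; rewrite !mxE /=; ring.
Qed.

End DotProduct.

Lemma dotvv_ge0 (R : realDomainType) n (a : 'cV[R]_n) : 0 <= dotv a a.
Proof. by apply: sumr_ge0 => i _; rewrite -expr2 sqr_ge0. Qed.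

Section EuclideanNorm.
Variables (R : realType) (n : nat).
Implicit Types (a : 'cV[R]_n) (r : R).

Lemma vnorm_ge0 a : 0 <= vnorm a.
Proof. exact: sqrtr_ge0. Qed.

Lemma vnorm_sqr a : vnorm a ^+ 2 = dotv a a.
Proof. by rewrite /vnorm sqr_sqrtr ?dotvv_ge0. Qed.

Lemma dotvv_lt_sqr a r : vnorm a < r -> dotv a a < r ^+ 2.
Proof. by rewrite -vnorm_sqr => ar; have := vnorm_ge0 a; nra. Qed.

Lemma sqr_le_dotvv a r : 0 <= r -> r <= vnorm a -> r ^+ 2 <= dotv a a.
Proof. by rewrite -vnorm_sqr => r0 ra; nra. Qed.

End EuclideanNorm.

Lemma mulmx_entry_continuous (R : numFieldType) m n (A : 'M[R]_(m, n)) i :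
  continuous (fun y : 'cV[R]_n => (A *m y) i 0).
Proof.
have -> : (fun y : 'cV[R]_n => (A *m y) i 0) = fun y => \sum_j A i j * y j 0.
  by apply/funext => y; rewrite mxE.
apply: continuous_big => [|j _ y]; first exact: add_continuous.
apply: (@continuousM _ _ (fun=> A i j) (fun y : 'cV[R]_n => y j 0)).
  exact: cst_continuous.
exact: coord_continuous.
Qed.

Lemma vnorm_continuous (R : realType) n : continuous (@vnorm R n).
Proof.
move=> y.
apply: (@continuous_comp _ _ _ (fun y : 'cV[R]_n => \sum_i y i 0 ^+ 2) Num.sqrt).
  apply: continuous_big y => [|i _ y]; first exact: add_continuous.
  apply: (@continuous_comp _ _ _ (fun y : 'cV[R]_n => y i 0) (fun x : R => x ^+ 2)).
    exact: coord_continuous.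
  exact: exprn_continuous.
exact: sqrt_continuous.
Qed.

Lemma closed_polytope (R : realType) m n (Pi : 'M[R]_(m, n)) (pi : 'cV[R]_m) :
  closed (polytope Pi pi).
Proof.
have -> : polytope Pi pi =
    \bigcap_(i in setT) ((fun y => (Pi *m y) i 0) @^-1` [set x | x <= pi i 0]).
  by apply/seteqP; split => [y Wy i _ | y Wy i]; [exact: Wy | exact: Wy].
apply: closed_bigI => i _.
apply: closed_comp; last exact: closed_le.
by move=> y _; exact: mulmx_entry_continuous.
Qed.

Lemma open_vnorm_lt (R : realType) n (w0 : 'cV[R]_n) (r : R) :
  open [set y | vnorm (y - w0) < r].
Proof.
rewrite -[X in open X]/((fun y => vnorm (y - w0)) @^-1` [set x | x < r]).
apply: open_comp; last exact: open_lt.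
move=> y _; apply: (@continuous_comp _ _ _ (fun y : 'cV[R]_n => y - w0)).
  by apply: continuousB; [exact: cvg_id | exact: cst_continuous].
exact: vnorm_continuous.
Qed.

Lemma open_translate_notin (R : numFieldType) (V : normedModType R) (A : set V) (a : V) :
  closed A -> open [set y | ~ A (a + y)].
Proof.
move=> cA; rewrite -[X in open X]/((fun y => a + y) @^-1` (~` A)).
apply: open_comp; last by rewrite openC.
by move=> y _; apply: continuousD; [exact: cst_continuous | exact: cvg_id].
Qed.

Lemma borel_vec_open (R : realType) n (A : set 'cV[R]_n) : open A -> borel_vec A.
Proof. exact: sub_gen_smallest. Qed.

Section SupportPoint.
Variables (R : realType) (n : nat).
Implicit Types (A : set 'cV[R]_n) (v c y : 'cV[R]_n).

Lemma dotv_continuous v : continuous (dotv v).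
Proof.
have -> : dotv v = fun y => (v^T *m y) 0 0 by apply/funext => y; rewrite dotvE.
exact: mulmx_entry_continuous.
Qed.

Lemma argmax_dotv_notin_interior A v c :
  0 < dotv v v -> (forall y, A y -> dotv v y <= dotv v c) -> ~ interior A c.
Proof.
move=> vv0 cmax /nbhs_ballP [r /= r0 cA].
set s := r / (2 * (`|v| + 1)).
have nv0 : 0 <= `|v| := normr_ge0 v.
have s0 : 0 < s by rewrite divr_gt0 // mulr_gt0 //; lra.
have : ball c r (c + s *: v).
  rewrite -ball_normE /= opprD addrA subrr add0r normrN normrZ gtr0_norm //.
  by rewrite /s mulrAC ltr_pdivrMr; [nra | rewrite mulr_gt0 //; lra].
move=> /cA /cmax; rewrite dotvDr dotvZr.
have : 0 < s * dotv v v by rewrite mulr_gt0.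
lra.
Qed.

Lemma compact_argmax_dotv_boundary A v :
  A !=set0 -> compact A -> 0 < dotv v v ->
  exists2 c, boundary A c & forall y, A y -> dotv v y <= dotv v c.
Proof.
move=> A0 cA vv0.
have [c /set_mem Ac cmax] :=
  compact_EVT_max A0 cA (continuous_subspaceT (@dotv_continuous v)).
have {}cmax y : A y -> dotv v y <= dotv v c by move=> Ay; apply/cmax/mem_set.
exists c => //; split; first exact: subset_closure.
exact: argmax_dotv_notin_interior cmax.
Qed.

End SupportPoint.

Lemma argmax_dotv_shift_notin (R : realDomainType) n (A : set 'cV[R]_n) (v c y : 'cV[R]_n) :
  (forall z, A z -> dotv v z <= dotv v c) -> dotv (y - c) (y - c) < dotv v v ->
  ~ A (v + y).
Proof.
move=> cmax yc /cmax; set u := y - c.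
have -> : v + y = c + (v + u) by rewrite /u addrCA [c + _]addrC subrK.
rewrite dotvDr.
have := dotv_polarization v u; have := dotvv_ge0 (v + u).
lra.
Qed.

Lemma excitation_lower_bound (R : realType) p nx (D : nat -> 'M[R]_(nx, p))
    (beta : R) t N (x : 'cV[R]_p) :
  psd (\sum_(t <= j < t + N) (D j)^T *m D j - beta%:M) ->
  beta * dotv x x <= \sum_(t <= j < t + N) dotv (D j *m x) (D j *m x).
Proof.
move=> /(_ x); rewrite mulmxBr mulmxBl mulmx_sumr mulmx_suml mxE summxE.
rewrite [X in _ + X]mxE mul_mx_scalar -scalemxAl mxE dotvE subr_ge0.
congr (_ <= _); apply: eq_bigr => j _.
by rewrite -dotvE trmx_mul !mulmxA.
Qed.

Lemma exists_ge_mean (R : realFieldType) (F : nat -> R) t N (a : R) :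
  0 < a -> a <= \sum_(t <= j < t + N) F j ->
  exists2 j, (t <= j < t + N)%N & a / N%:R <= F j.
Proof.
case: N => [|N] a0; first by rewrite addn0 big_geq //; lra.
move=> aF; apply: contrapT => noj.
have Flt j : (t <= j < t + N.+1)%N -> F j < a / N.+1%:R.
  by move=> jt; rewrite ltNge; apply/negP => Fj; apply: noj; exists j.
have tN : (t < t + N.+1)%N by rewrite addnS ltnS leq_addr.
have := ltr_sum_nat tN Flt.
rewrite sumr_const_nat addKn -(mulr_natr (a / _)) divfK ?pnatr_eq0 //.
lra.
Qed.

Theorem proposition2 (R : realType) (d : measure_display) (T : measurableType d)
  (P : probability T R) (nx p m : nat)
  (thetas : 'cV[R]_p) (Pi : 'M[R]_(m, nx)) (pi : 'cV[R]_m)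
  (w : nat -> T -> 'cV[R]_nx) (D : nat -> 'M[R]_(nx, p))
  (p_w : R -> R) (tau beta : R) (Nu : nat) :
  (forall i, 0 < pi i 0) ->
  compact (polytope Pi pi) ->
  (forall t, rand_vec (w t)) ->
  mutually_independent P w ->
  (forall t x, polytope Pi pi (w t x)) ->
  (* tight disturbance bound assumption *)
  (forall e, 0 < e -> 0 < p_w e <= 1) ->
  (forall w0, boundary (polytope Pi pi) w0 -> forall e, 0 < e -> forall t : nat,
     ((p_w e)%:E <= P [set x | (vnorm (w t x - w0) < e)%R])%E) ->
  (* persistent excitation assumption *)
  0 < tau -> 0 < beta -> ((p + nx.-1) %/ nx <= Nu)%N ->
  (forall t, opnorm_le (D t) tau) ->
  (forall t, psd (\sum_(t <= j < t + Nu) (D j)^T *m D j - beta%:M)) ->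
  forall (t : nat) (e : R) (theta : 'cV[R]_p), 0 < e -> e <= vnorm (thetas - theta) ->
  exists j : nat, (t + 1 <= j <= t + Nu)%N /\
    ((p_w (e * Num.sqrt (beta / Nu%:R)))%:E <=
       P [set x | ~ Delta Pi pi D w thetas j x theta])%E.
Proof.
move=> pi0 cW w_rv _ _ _ tight _ beta0 _ _ exc t e theta e0 eth.
set x := thetas - theta; set e' := e * Num.sqrt (beta / Nu%:R).
have ex : e ^+ 2 <= dotv x x := sqr_le_dotvv (ltW e0) eth.
have bx0 : 0 < beta * dotv x x by rewrite mulr_gt0 // (lt_le_trans _ ex) ?exprn_gt0.
have [j jt] := exists_ge_mean bx0 (excitation_lower_bound x (exc t)).
set v := D j *m x => xv.
have Nu0 : (0 < Nu)%N by case: Nu jt {exc xv e'} => // /andP[tj]; rewrite addn0 ltnNge tj.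
have e'0 : 0 < e' by rewrite mulr_gt0 // sqrtr_gt0 divr_gt0 // ltr0n.
have e'v : e' ^+ 2 <= dotv v v.
  rewrite exprMn sqr_sqrtr ?divr_ge0 ?ler0n ?(ltW beta0) // mulrA [_ * beta]mulrC.
  apply: le_trans xv; rewrite ler_pM2r ?invr_gt0 ?ltr0n // ler_pM2l //.
have W0 : polytope Pi pi !=set0 by exists 0 => i; rewrite mulmx0 mxE ltW.
have vv0 : 0 < dotv v v := lt_le_trans (exprn_gt0 2 e'0) e'v.
have [w0 w0W w0max] := compact_argmax_dotv_boundary W0 cW vv0.
exists j.+1; split; first by rewrite addn1 ltnS.
apply: le_trans (tight w0 w0W e' e'0 j) _; rewrite /Delta /=.
apply: le_measure; rewrite ?inE.
- exact: (w_rv j _ (borel_vec_open (@open_vnorm_lt _ _ w0 e'))).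
- exact: (w_rv j _ (borel_vec_open
    (@open_translate_notin _ _ _ v (@closed_polytope _ _ _ Pi pi)))).
move=> y /= wy; apply: (@argmax_dotv_shift_notin _ _ _ v w0 (w j y) w0max).
exact: lt_le_trans (dotvv_lt_sqr wy) e'v.
Qed.
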